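(* Let $F:\mathbb{R}^N\to\mathbb{R}\cup\{+\infty\}$ be convex, proper and lower semicontinuous, $A\in C^1(\operatorname{dom}F;\mathbb{R}^M)$, $J(x):=\frac12\|A(x)\|^2+F(x)$, and for $z^k\in\operatorname{dom}F$ let $J_k(x):=\frac12\|A(z^k)+\nabla A(z^k)^*(x-z^k)\|^2+F(x)$. (a) Let $\rho>0$ and let $\tilde x^k$ be such that some $e^k\in\partial J_k(\tilde x^k)$ satisfies $\|e^k\|\le\rho\|\tilde x^k-z^k\|$. Put $q^k:=e^k-\nabla A(z^k)[A(z^k)+\nabla A(z^k)^*(\tilde x^k-z^k)]\in\partial F(\tilde x^k)$. Suppose that $$F(z^k)-F(\tilde x^k)\ge\langle q^k,z^k-\tilde x^k\rangle+\tfrac12\|z^k-\tilde x^k\|_{\Gamma_k}^2$$ for some symmetric operator $\Gamma_k$ with $\nabla A(z^k)\nabla A(z^k)^*+\Gamma_k\ge(2\rho+\beta)\mathrm{Id}$ for some $\beta>0$. Then $$J(z^k)-J_k(\tilde x^k)\ge\tfrac\beta2\|\tilde x^k-z^k\|^2.$$ (b) Suppose moreover that Assumption 2.1 holds for $z^0$, that $\varepsilon\in(0,\beta)$ and $w$ satisfies $0<w\le\min\{1,\ \mathfrak d/\sqrt{2\beta^{-1}(J(z^0)-\inf F)},\ (\beta-\varepsilon)/(2CA_{\max})\}$, and that the iterates are generated by $z^{k+1}:=(1-w)z^k+w\tilde x^k$, where for every $k$ the point $\tilde x^k$ is an approximate minimiser of $J_k$ (no proximal term) satisfying the accuracy condition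 of (a) with the same $\rho$, and the hypothesis of (a) holds for every $k$ with the same $\beta$. Then: $J(z^k)$ decreases monotonically to some $L\in\mathbb{R}$; every accumulation point $\hat x$ of $\{z^k\}$ is Clarke-critical with $J(\hat x)=L$; and, with $V_L:=\{\hat x\in\operatorname{dom}F\mid0\in\partial_CJ(\hat x),J(\hat x)=L\}$, whenever $V_L=U_1\cup U_2$ with $U_1,U_2$ disjoint closed sets, all accumulation points lie in the same $U_j$ and $\operatorname{dist}(z^k,U_j)\to0$.
   Context: $\nabla A(y)\in\mathbb{R}^{N\times M}$ denotes the transpose of the Jacobian of $A$ at $y$. For a symmetric operator $\Gamma$, $\|x\|_\Gamma^2:=\langle\Gamma x,x\rangle$; operator inequalities $S\ge T$ mean $S-T$ is positive semidefinite. $\partial$ is the convex subdifferential. Assumption 2.1 (for given $z^0$): $\operatorname{lev}_{J(z^0)}J:=\{x\mid J(x)\le J(z^0)\}$ is bounded, $\inf F>-\infty$, $A_{\max}:=\sup_{z\in\operatorname{dom}F}\|A(z)\|<\infty$, and there are $\mathfrak d,C>0$ with $\|A(x)-A(y)-\nabla A(y)^*(x-y)\|\le C\|x-y\|^2$ for all $y\in\operatorname{lev}_{J(z^0)}J$ and $x$ with $\|x-y\|\le\mathfrak d$. Clarke subdifferential: $\partial_CJ(x)=\nabla A(x)A(x)+\partial F(x)$; $x$ is Clarke-critical if $0\in\partial_CJ(x)$. The middle term of the bound on $w$ is $+\infty$ if $J(z^0)=\inf F$. *)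

From mathcomp Require Import all_boot.
From Stdlib Require Import Reals.
Set Implicit Arguments.
Unset Strict Implicit.
Unset Printing Implicit Defensive.
Local Open Scope R_scope.

Definition vec (n : nat) := 'I_n -> R.
Definition mat (m n : nat) := 'I_m -> 'I_n -> R.

Definition vadd n (x y : vec n) : vec n := fun i => x i + y i.
Definition vsub n (x y : vec n) : vec n := fun i => x i - y i.
Definition vscale n (a : R) (x : vec n) : vec n := fun i => a * x i.
Definition dot n (x y : vec n) : R := \big[Rplus/0]_(i < n) (x i * y i).
Definition norm n (x : vec n) : R := sqrt (dot x x).
Definition mv m n (B : mat m n) (x : vec n) : vec m :=
  fun i => \big[Rplus/0]_(j < n) (B i j * x j).
Definition mtv m n (B : mat m n) (u : vec m) : vec n :=
  fun j => \big[Rplus/0]_(i < m) (B i j * u i).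
Definition symmetric n (G : mat n n) : Prop := forall i j, G i j = G j i.
Definition qform n (G : mat n n) (v : vec n) : R := dot (mv G v) v.

Inductive Rbar := Fin (r : R) | PInf.
Definition Rbar_le (x y : Rbar) : Prop :=
  match x, y with
  | _, PInf => True
  | PInf, Fin _ => False
  | Fin a, Fin b => a <= b
  end.
Definition Rbar_lt (x y : Rbar) : Prop :=
  match x, y with
  | PInf, _ => False
  | Fin _, PInf => True
  | Fin a, Fin b => a < b
  end.
Definition Rbar_addR (r : R) (x : Rbar) : Rbar :=
  match x with Fin a => Fin (r + a) | PInf => PInf end.

Section Defs.
Context {N M : nat}.

Definition in_dom (F : vec N -> Rbar) (x : vec N) : Prop := F x <> PInf.

Definition convex_fun (F : vec N -> Rbar) : Prop :=
  forall (x y : vec N) (fx fy t : R), F x = Fin fx -> F y = Fin fy ->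
    0 <= t <= 1 ->
    Rbar_le (F (vadd (vscale t x) (vscale (1 - t) y))) (Fin (t * fx + (1 - t) * fy)).

Definition proper_fun (F : vec N -> Rbar) : Prop := exists x, in_dom F x.

Definition lsc_fun (F : vec N -> Rbar) : Prop :=
  forall (x : vec N) (r : R), Rbar_lt (Fin r) (F x) ->
    exists delta, 0 < delta /\
      forall y, norm (vsub y x) < delta -> Rbar_lt (Fin r) (F y).

(** A in C^1(dom F; R^M), with jac y the Jacobian of A at y (i.e. the adjoint of nabla A(y)):
    differentiability relative to dom F, and continuity of the Jacobian on dom F. *)
Definition C1_on_dom (F : vec N -> Rbar) (A : vec N -> vec M) (jac : vec N -> mat M N) : Prop :=
  (forall y, in_dom F y -> forall eps, 0 < eps -> exists delta, 0 < delta /\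
     forall x, in_dom F x -> norm (vsub x y) < delta ->
       norm (vsub (vsub (A x) (A y)) (mv (jac y) (vsub x y))) <= eps * norm (vsub x y)) /\
  (forall y, in_dom F y -> forall eps, 0 < eps -> exists delta, 0 < delta /\
     forall x, in_dom F x -> norm (vsub x y) < delta ->
       forall i j, Rabs (jac x i j - jac y i j) < eps).

Definition Jfun (A : vec N -> vec M) (F : vec N -> Rbar) (x : vec N) : Rbar :=
  Rbar_addR (/ 2 * norm (A x) ^ 2) (F x).

Definition linA (A : vec N -> vec M) (jac : vec N -> mat M N) (z x : vec N) : vec M :=
  vadd (A z) (mv (jac z) (vsub x z)).

Definition Jlin (A : vec N -> vec M) (jac : vec N -> mat M N) (F : vec N -> Rbar)
  (z x : vec N) : Rbar :=
  Rbar_addR (/ 2 * norm (linA A jac z x) ^ 2) (F x).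

Definition subdiff (G : vec N -> Rbar) (x e : vec N) : Prop :=
  exists gx, G x = Fin gx /\
    forall y, Rbar_le (Fin (gx + dot e (vsub y x))) (G y).

(** x is Clarke-critical: 0 \in nabla A(x) A(x) + dF(x) *)
Definition clarke_critical (A : vec N -> vec M) (jac : vec N -> mat M N)
  (F : vec N -> Rbar) (x : vec N) : Prop :=
  subdiff F x (vscale (-1) (mtv (jac x) (A x))).

Definition qvec (A : vec N -> vec M) (jac : vec N -> mat M N) (z xt e : vec N) : vec N :=
  vsub e (mtv (jac z) (linA A jac z xt)).

Definition hypA (A : vec N -> vec M) (jac : vec N -> mat M N) (F : vec N -> Rbar)
  (rho beta : R) (z xt e : vec N) (Gam : mat N N) : Prop :=
  in_dom F z /\
  subdiff (Jlin A jac F z) xt e /\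
  norm e <= rho * norm (vsub xt z) /\
  symmetric Gam /\
  (forall v : vec N,
     dot (mtv (jac z) (mv (jac z) v)) v + qform Gam v >= (2 * rho + beta) * norm v ^ 2) /\
  Rbar_le (Rbar_addR (dot (qvec A jac z xt e) (vsub z xt) + / 2 * qform Gam (vsub z xt)) (F xt))
          (F z).

Definition bounded_set (S : vec N -> Prop) : Prop :=
  exists R0, forall x, S x -> norm x <= R0.

Definition is_inf_of (F : vec N -> Rbar) (m : R) : Prop :=
  (forall x, Rbar_le (Fin m) (F x)) /\
  (forall m', (forall x, Rbar_le (Fin m') (F x)) -> m' <= m).

Definition is_sup_normA (F : vec N -> Rbar) (A : vec N -> vec M) (Amax : R) : Prop :=
  (forall z, in_dom F z -> norm (A z) <= Amax) /\
  (forall b, (forall z, in_dom F z -> norm (A z) <= b) -> Amax <= b).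

Definition accum_pt (z : nat -> vec N) (x : vec N) : Prop :=
  forall eps, 0 < eps -> forall K, exists k, (K <= k)%nat /\ norm (vsub (z k) x) < eps.

Definition closed_vset (U : vec N -> Prop) : Prop :=
  forall x, (forall eps, 0 < eps -> exists u, U u /\ norm (vsub x u) < eps) -> U x.

Definition dist_to_0 (z : nat -> vec N) (U : vec N -> Prop) : Prop :=
  forall eps, 0 < eps -> exists K, forall k, (K <= k)%nat ->
    exists u, U u /\ norm (vsub (z k) u) < eps.

Definition Rbar_cv (u : nat -> Rbar) (L : R) : Prop :=
  forall eps, 0 < eps -> exists K, forall k, (K <= k)%nat ->
    exists r, u k = Fin r /\ Rabs (r - L) < eps.

End Defs.

(** (a) With h := x~ - z, the assumed inequality for F and the definition of q turn
    J(z) - J_k(x~) into at least (1/2) <(nabla A nabla A^* + Gamma) h, h> - <e, h>, which is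
    >= (beta/2) |h|^2 because |e| <= rho |h|.

    (b) Convexity of F and of the squared linearization, together with the Taylor bound
    C |w h|^2 on A, show that the relaxed step satisfies
    J(z^{k+1}) <= J(z^k) - (w eps / 2) |x~^k - z^k|^2, hence J(z^k) decreases to some L and
    x~^k - z^k -> 0.  Along a subsequence z^k -> x^, the subgradients q^k of F at x~^k tend to
    - nabla A(x^) A(x^), and lower semicontinuity closes the graph of the subdifferential:
    x^ is Clarke-critical, and J(x^) = lim J_k(x~^k) = L.  Finally the iterates are bounded
    and their steps vanish, so their accumulation points cannot be split between two disjoint
    closed sets (Ostrowski). *)

From HB Require Import structures.
From Stdlib Require Import Reals Lra Psatz FunctionalExtensionality ClassicalEpsilon Classical.
From mathcomp Require Import all_boot.
Local Open Scope R_scope.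
Set Implicit Arguments.
Unset Strict Implicit.

Lemma Rplus_assoc_law : associative Rplus. Proof. by move=> *; ring. Qed.
HB.instance Definition _ := Monoid.isComLaw.Build R 0 Rplus Rplus_assoc_law Rplus_comm Rplus_0_l.

(** * Vectors and matrices *)

Section RealSums.
Context {n : nat}.
Implicit Types f g : 'I_n -> R.

Lemma sumrZ (a : R) f : \big[Rplus/0]_(i < n) (a * f i) = a * \big[Rplus/0]_(i < n) f i.
Proof. by elim/big_rec2: _ => [|i y1 y2 _ ->]; ring. Qed.

Lemma sumrD f g : \big[Rplus/0]_(i < n) (f i + g i) =
  \big[Rplus/0]_(i < n) f i + \big[Rplus/0]_(i < n) g i.
Proof. exact: big_split. Qed.

Lemma sumrN f : \big[Rplus/0]_(i < n) (- f i) = - \big[Rplus/0]_(i < n) f i.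
Proof. by elim/big_rec2: _ => [|i y1 y2 _ ->]; ring. Qed.

Lemma sumrB f g : \big[Rplus/0]_(i < n) (f i - g i) =
  \big[Rplus/0]_(i < n) f i - \big[Rplus/0]_(i < n) g i.
Proof. by rewrite sumrD sumrN. Qed.

Lemma sumr_const0 : \big[Rplus/0]_(i < n) 0 = 0.
Proof. by elim/big_rec: _ => [|i y _ ->]; ring. Qed.

Lemma ler_sum f g : (forall i, f i <= g i) ->
  \big[Rplus/0]_(i < n) f i <= \big[Rplus/0]_(i < n) g i.
Proof. by move=> H; elim/big_rec2: _ => [|i y1 y2 _]; [lra | have := H i; lra]. Qed.

Lemma sumr_ge0 f : (forall i, 0 <= f i) -> 0 <= \big[Rplus/0]_(i < n) f i.
Proof. by move=> H; elim/big_rec: _ => [|i y _]; [lra | have := H i; lra]. Qed.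

Lemma Rabs_sum_le f : Rabs (\big[Rplus/0]_(i < n) f i) <= \big[Rplus/0]_(i < n) Rabs (f i).
Proof.
elim/big_rec2: _ => [|i y1 y2 _ H]; first by rewrite Rabs_R0; lra.
by have := Rabs_triang (f i) y2; lra.
Qed.

Lemma ler_sum_term f (i0 : 'I_n) : (forall i, 0 <= f i) -> f i0 <= \big[Rplus/0]_(i < n) f i.
Proof.
move=> H; rewrite (bigD1 i0) //=.
have : 0 <= \big[Rplus/0]_(i < n | i != i0) f i.
  by elim/big_rec: _ => [|i y _]; [lra | have := H i; lra].
by move/(Rplus_le_compat_l (f i0)); rewrite Rplus_0_r.
Qed.

End RealSums.

Lemma sum_sqr_le_sqr_sum m (f : 'I_m -> R) :
  \big[Rplus/0]_(i < m) (f i * f i) <= (\big[Rplus/0]_(i < m) Rabs (f i)) ^ 2.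
Proof.
elim: m f => [|m IH] f; first by rewrite !big_ord0; lra.
rewrite !big_ord_recr /=.
have := IH (fun i => f (widen_ord (leqnSn m) i)).
have := @sumr_ge0 m (fun i => Rabs (f (widen_ord (leqnSn m) i))) (fun i => Rabs_pos _).
have := Rabs_pos (f ord_max); have := Rsqr_abs (f ord_max); rewrite /Rsqr.
set s := \big[Rplus/0]_(i < m) (_ * _); set t := \big[Rplus/0]_(i < m) Rabs _.
simpl; nra.
Qed.

Section Vectors.
Context {n : nat}.
Implicit Types x y z : vec n.

Lemma vecP x y : (forall i, x i = y i) -> x = y.
Proof. exact: functional_extensionality. Qed.

Lemma dotC x y : dot x y = dot y x.
Proof. by rewrite /dot; apply: eq_bigr => i _; ring. Qed.

Lemma dotDl x y z : dot (vadd x y) z = dot x z + dot y z.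
Proof. by rewrite /dot -sumrD; apply: eq_bigr => i _; rewrite /vadd; ring. Qed.

Lemma dotBl x y z : dot (vsub x y) z = dot x z - dot y z.
Proof. by rewrite /dot -sumrB; apply: eq_bigr => i _; rewrite /vsub; ring. Qed.

Lemma dotZl a x z : dot (vscale a x) z = a * dot x z.
Proof. by rewrite /dot -sumrZ; apply: eq_bigr => i _; rewrite /vscale; ring. Qed.

Lemma dotDr x y z : dot z (vadd x y) = dot z x + dot z y.
Proof. by rewrite dotC dotDl !(dotC z). Qed.

Lemma dotBr x y z : dot z (vsub x y) = dot z x - dot z y.
Proof. by rewrite dotC dotBl !(dotC z). Qed.

Lemma dotZr a x z : dot z (vscale a x) = a * dot z x.
Proof. by rewrite dotC dotZl dotC. Qed.

Lemma dot_ge0 x : 0 <= dot x x.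
Proof. by apply: sumr_ge0 => i; nra. Qed.

Lemma norm_ge0 x : 0 <= norm x.
Proof. exact: sqrt_pos. Qed.

Lemma sqr_norm x : norm x ^ 2 = dot x x.
Proof. by rewrite /norm /= Rmult_1_r sqrt_sqrt //; apply: dot_ge0. Qed.

Lemma sqr_norm_add x y : norm (vadd x y) ^ 2 = norm x ^ 2 + 2 * dot x y + norm y ^ 2.
Proof. by rewrite !sqr_norm dotDl !dotDr (dotC y x); ring. Qed.

Lemma sqr_dot_le x y : dot x y ^ 2 <= dot x x * dot y y.
Proof.
set a := dot x x; set b := dot y y; set c := dot x y.
have quad t : 0 <= a - 2 * t * c + t ^ 2 * b.
  have := dot_ge0 (vsub x (vscale t y)).
  by rewrite dotBl !dotBr !dotZl !dotZr (dotC y x) -/a -/b -/c; nra.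
have := dot_ge0 y; rewrite -/b => b_ge0.
case: (Req_dec b 0) => [b0|bn0].
  case: (Req_dec c 0) => [c0|cn0]; first by rewrite b0 c0; nra.
  have := quad ((a + 1) / (2 * c)); rewrite b0.
  have -> : a - 2 * ((a + 1) / (2 * c)) * c + ((a + 1) / (2 * c)) ^ 2 * 0 = -1 by field.
  lra.
have := quad (c / b).
have -> : a - 2 * (c / b) * c + (c / b) ^ 2 * b = (a * b - c ^ 2) / b by field.
move=> H; have : 0 <= (a * b - c ^ 2) / b * b by apply: Rmult_le_pos; lra.
have -> : (a * b - c ^ 2) / b * b = a * b - c ^ 2 by field.
lra.
Qed.

Lemma dot_le_norm x y : dot x y <= norm x * norm y.
Proof.
rewrite /norm -sqrt_mult; try exact: dot_ge0.
apply: Rle_trans (Rle_abs _) _; rewrite -sqrt_Rsqr_abs; apply: sqrt_le_1_alt.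
by rewrite /Rsqr; have := sqr_dot_le x y; simpl; lra.
Qed.

Lemma normZ a x : norm (vscale a x) = Rabs a * norm x.
Proof.
rewrite /norm dotZl dotZr -Rmult_assoc sqrt_mult; [|nra|exact: dot_ge0].
by rewrite -sqrt_Rsqr_abs.
Qed.

Lemma norm_sub_sym x y : norm (vsub x y) = norm (vsub y x).
Proof. by rewrite /norm !dotBl !dotBr (dotC x y); congr sqrt; ring. Qed.

Lemma norm_triangle x y : norm (vadd x y) <= norm x + norm y.
Proof.
have := norm_ge0 x; have := norm_ge0 y => ny nx.
rewrite {1}/norm -(sqrt_pow2 (norm x + norm y)); last lra.
apply: sqrt_le_1_alt; rewrite -sqr_norm sqr_norm_add.
by have := dot_le_norm x y; nra.
Qed.

Lemma norm_sub_triangle x y z : norm (vsub x z) <= norm (vsub x y) + norm (vsub y z).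
Proof.
have -> : vsub x z = vadd (vsub x y) (vsub y z) by apply: vecP => i; rewrite /vsub /vadd; ring.
exact: norm_triangle.
Qed.

Lemma norm_le_sub_add x y : norm x <= norm (vsub x y) + norm y.
Proof.
have {1}-> : x = vadd (vsub x y) y by apply: vecP => i; rewrite /vsub /vadd; ring.
exact: norm_triangle.
Qed.

Lemma Rabs_coord_le_norm x i : Rabs (x i) <= norm x.
Proof.
rewrite /norm -sqrt_Rsqr_abs; apply: sqrt_le_1_alt.
by apply: (ler_sum_term (f := fun j => x j * x j)) => j; nra.
Qed.

Lemma norm_le_sum_abs x : norm x <= \big[Rplus/0]_(i < n) Rabs (x i).
Proof.
rewrite /norm -(sqrt_pow2 (\big[Rplus/0]_(i < n) Rabs (x i))).
  by apply: sqrt_le_1_alt; apply: sum_sqr_le_sqr_sum.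
by apply: sumr_ge0 => i; apply: Rabs_pos.
Qed.

End Vectors.

Section Matrices.
Context {m n : nat}.
Implicit Types (B : mat m n) (x y : vec n) (u : vec m).

Lemma mvD B x y : mv B (vadd x y) = vadd (mv B x) (mv B y).
Proof. by apply: vecP => i; rewrite /mv /vadd -sumrD; apply: eq_bigr => j _; ring. Qed.

Lemma mvZ B a x : mv B (vscale a x) = vscale a (mv B x).
Proof. by apply: vecP => i; rewrite /mv /vscale -sumrZ; apply: eq_bigr => j _; ring. Qed.

Lemma dot_mtv B u x : dot (mtv B u) x = dot u (mv B x).
Proof.
rewrite /dot /mtv /mv.
transitivity (\big[Rplus/0]_(j < n) \big[Rplus/0]_(i < m) (B i j * u i * x j)).
  by apply: eq_bigr => j _; rewrite Rmult_comm -sumrZ; apply: eq_bigr => i _; ring.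
by rewrite exchange_big; apply: eq_bigr => i _; rewrite -sumrZ; apply: eq_bigr => j _; ring.
Qed.

Lemma mv_bounded B : exists K, 0 <= K /\ forall x, norm (mv B x) <= K * norm x.
Proof.
exists (\big[Rplus/0]_(i < m) \big[Rplus/0]_(j < n) Rabs (B i j)); split.
  by apply: sumr_ge0 => i; apply: sumr_ge0 => j; apply: Rabs_pos.
move=> x; apply: Rle_trans (norm_le_sum_abs _) _.
rewrite Rmult_comm -sumrZ; apply: ler_sum => i.
apply: Rle_trans (Rabs_sum_le _) _; rewrite -sumrZ; apply: ler_sum => j.
by rewrite Rabs_mult; have := Rabs_coord_le_norm x j; have := Rabs_pos (B i j); nra.
Qed.

End Matrices.

(** * Sequences and Bolzano--Weierstrass *)

Lemma Un_cv_const (c : R) : Un_cv (fun _ => c) c.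
Proof. by move=> eps He; exists 0%nat => k _; rewrite /R_dist Rminus_diag_eq // Rabs_R0. Qed.

Lemma Un_cv_eventually (u : nat -> R) l eps : Un_cv u l -> 0 < eps ->
  exists K, forall k, (K <= k)%nat -> Rabs (u k - l) < eps.
Proof. by move=> H /H [K HK]; exists K => k /leP; apply: HK. Qed.

Lemma Un_cv_squeeze0 (u v : nat -> R) K :
  (forall k, (K <= k)%nat -> 0 <= u k <= v k) -> Un_cv v 0 -> Un_cv u 0.
Proof.
move=> H Hv eps He; case: (Un_cv_eventually Hv He) => K0 HK.
exists (maxn K K0) => k /leP Hk; rewrite /R_dist Rminus_0_r.
have := HK k (leq_trans (leq_maxr K K0) Hk); have := H k (leq_trans (leq_maxl K K0) Hk).
by rewrite Rminus_0_r; case=> u0 uv /Rabs_def2 ?; rewrite Rabs_right; lra.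
Qed.

Lemma Un_cv_sqr0 (u : nat -> R) :
  (forall k, 0 <= u k) -> Un_cv (fun k => u k ^ 2) 0 -> Un_cv u 0.
Proof.
move=> u0 H eps He; case: (H (eps ^ 2) ltac:(nra)) => K HK; exists K => k /HK.
rewrite /R_dist !Rminus_0_r => /Rabs_def2 h; have := u0 k => uk.
by rewrite Rabs_right; nra.
Qed.

Lemma Un_cv_sum n (F : nat -> 'I_n -> R) (l : 'I_n -> R) :
  (forall i, Un_cv (fun k => F k i) (l i)) ->
  Un_cv (fun k => \big[Rplus/0]_(i < n) F k i) (\big[Rplus/0]_(i < n) l i).
Proof.
elim: n F l => [|n IH] F l H.
  rewrite big_ord0; apply: (Un_cv_ext (fun _ => 0)) => [k|]; first by rewrite big_ord0.
  exact: Un_cv_const.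
rewrite big_ord_recr.
apply: (Un_cv_ext (fun k => \big[Rplus/0]_(i < n) F k (widen_ord (leqnSn n) i) + F k ord_max)).
  by move=> k; rewrite big_ord_recr.
by apply: CV_plus; [apply: (IH (fun k i => F k (widen_ord (leqnSn n) i))) | apply: H].
Qed.

Lemma Un_cv_dot n (u v : nat -> vec n) (a b : vec n) :
  (forall i, Un_cv (fun k => u k i) (a i)) -> (forall i, Un_cv (fun k => v k i) (b i)) ->
  Un_cv (fun k => dot (u k) (v k)) (dot a b).
Proof. by move=> Hu Hv; apply: Un_cv_sum => i; apply: CV_mult. Qed.

Lemma Un_cv_le (u : nat -> R) a b : Un_cv u a -> (forall k, u k <= b) -> a <= b.
Proof.
move=> H Hb; apply: Rnot_lt_le => Hlt.
by case: (H (a - b) ltac:(lra)) => K /(_ K (le_n K)) /Rabs_def2; have := Hb K; lra.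
Qed.

Definition strictly_increasing (phi : nat -> nat) := forall k, (phi k < phi k.+1)%nat.

Lemma strictly_increasing_ge phi : strictly_increasing phi -> forall k, (k <= phi k)%nat.
Proof. by move=> H; elim=> [|k IH] //; apply: leq_ltn_trans IH (H k). Qed.

Lemma strictly_increasing_lt phi : strictly_increasing phi ->
  forall a b, (a < b)%nat -> (phi a < phi b)%nat.
Proof.
move=> H a b /subnK <-; elim: (b - a.+1)%nat => [|c IH]; first exact: H.
by rewrite addSn; apply: ltn_trans IH (H _).
Qed.

Lemma strictly_increasing_comp phi psi :
  strictly_increasing phi -> strictly_increasing psi -> strictly_increasing (phi \o psi).
Proof. by move=> Hphi Hpsi k /=; apply: strictly_increasing_lt Hphi _ _ (Hpsi k). Qed.

Lemma Un_cv_subseq (u : nat -> R) l phi : strictly_increasing phi ->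
  Un_cv u l -> Un_cv (fun k => u (phi k)) l.
Proof.
move=> Hphi H eps /H [K HK]; exists K => k /leP Hk; apply: HK.
by apply/leP; apply: leq_trans Hk (strictly_increasing_ge Hphi k).
Qed.

Lemma extract_increasing (P : nat -> nat -> Prop) :
  (forall k K, exists p, (K <= p)%nat /\ P k p) ->
  exists phi, strictly_increasing phi /\ forall k, P k (phi k).
Proof.
move=> H.
case: (choice (fun (kK : nat * nat) p => (kK.2 <= p)%nat /\ P kK.1 p) (fun kK => H kK.1 kK.2))
  => g Hg.
pose fix phi k := if k is k'.+1 then g (k, (phi k').+1) else g (0, 0)%nat.
by exists phi; split; [move=> k; apply: (Hg (_, _)).1 | case=> [|k]; apply: (Hg (_, _)).2].
Qed.

Lemma inv_INR_succ_le_lt eps : 0 < eps ->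
  exists K, forall k, (K <= k)%nat -> / INR k.+1 < eps.
Proof.
move=> He; case: (archimed_cor1 eps He) => K [HK K0]; exists K => k Hk.
apply: Rle_lt_trans HK; apply: Rinv_le_contravar; first exact: lt_0_INR.
by rewrite S_INR; have := le_INR _ _ (elimT leP Hk); lra.
Qed.

Lemma subseq_cv0_of_frequently (v : nat -> R) :
  (forall eps, 0 < eps -> forall K, exists p, (K <= p)%nat /\ Rabs (v p) < eps) ->
  exists phi, strictly_increasing phi /\ Un_cv (fun k => v (phi k)) 0.
Proof.
move=> H.
case: (extract_increasing (P := fun k p => Rabs (v p) < / INR k.+1)).
  by move=> k K; apply: H; apply/Rinv_0_lt_compat/lt_0_INR/ltP.
move=> phi [Hphi Hp]; exists phi; split => // eps /inv_INR_succ_le_lt [K HK].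
by exists K => k /leP Hk; rewrite /R_dist Rminus_0_r; apply: Rlt_trans (Hp k) (HK k Hk).
Qed.

Section VectorSequences.
Context {n : nat}.
Implicit Types (u : nat -> vec n) (x : vec n).

Definition vec_cv u x := Un_cv (fun k => norm (vsub (u k) x)) 0.

Lemma vec_cv_coord u x : vec_cv u x -> forall i, Un_cv (fun k => u k i) (x i).
Proof.
move=> H i eps /H [K HK]; exists K => k /HK; rewrite /R_dist Rminus_0_r.
rewrite Rabs_right; last exact/Rle_ge/norm_ge0.
exact: Rle_lt_trans (Rabs_coord_le_norm (vsub (u k) x) i).
Qed.

Lemma norm_cv0_coord u : Un_cv (fun k => norm (u k)) 0 -> forall i, Un_cv (fun k => u k i) 0.
Proof.
move=> H i eps /H [K HK]; exists K => k /HK; rewrite /R_dist !Rminus_0_r Rabs_right.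
  exact: Rle_lt_trans (Rabs_coord_le_norm _ _).
exact/Rle_ge/norm_ge0.
Qed.

Lemma coord_vec_cv u x : (forall i, Un_cv (fun k => u k i) (x i)) -> vec_cv u x.
Proof.
move=> H.
apply: (Un_cv_squeeze0 (v := fun k => \big[Rplus/0]_(i < n) Rabs (u k i - x i)) (K := 0%nat)).
  by move=> k _; split; [apply: norm_ge0 | apply: norm_le_sum_abs].
have := Un_cv_sum (F := fun k i => Rabs (u k i - x i)) (l := fun _ => 0).
rewrite sumr_const0; apply => i eps /(H i) [K HK].
by exists K => k /HK; rewrite /R_dist Rminus_0_r Rabs_Rabsolu.
Qed.

Lemma vec_cv_eventually u x eps : vec_cv u x -> 0 < eps ->
  exists K, forall k, (K <= k)%nat -> norm (vsub (u k) x) < eps.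
Proof.
move=> H /(Un_cv_eventually H) [K HK]; exists K => k /HK.
by rewrite Rminus_0_r Rabs_right //; apply/Rle_ge/norm_ge0.
Qed.

Lemma accum_pt_subseq u x : accum_pt u x ->
  exists phi, strictly_increasing phi /\ vec_cv (fun k => u (phi k)) x.
Proof.
move=> H; apply: (subseq_cv0_of_frequently (v := fun p => norm (vsub (u p) x))) => eps He K.
case: (H eps He K) => p [Hp Hup]; exists p; split => //.
by rewrite Rabs_right //; apply/Rle_ge/norm_ge0.
Qed.

Lemma bounded_real_subseq_cv (v : nat -> R) R0 : (forall k, Rabs (v k) <= R0) ->
  exists l phi, strictly_increasing phi /\ Un_cv (fun k => v (phi k)) l.
Proof.
move=> Hb.
case: (@Bolzano_Weierstrass v (fun c => - R0 <= c <= R0) (compact_P3 _ _)).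
  by move=> k; have := Hb k; rewrite /Rabs; case: Rcase_abs; lra.
move=> l Hl; exists l.
case: (subseq_cv0_of_frequently (v := fun k => v k - l)).
  move=> eps He K.
  have Hn : neighbourhood (fun y => Rabs (y - l) < eps) l by exists (mkposreal eps He).
  by case: (Hl _ K Hn) => p [Hp Hp2]; exists p; split => //; apply/leP.
move=> phi [Hphi Hc]; exists phi; split => // eps /Hc [K HK].
by exists K => k /HK; rewrite /R_dist Rminus_0_r.
Qed.

(** Bolzano--Weierstrass, one coordinate at a time. *)
Lemma bounded_vec_subseq_cv u R0 : (forall k, norm (u k) <= R0) ->
  exists phi x, strictly_increasing phi /\ vec_cv (fun k => u (phi k)) x.
Proof.
move=> Hb.
suff /(_ n (leqnn n)) [phi [x [Hphi Hx]]] : forall j, (j <= n)%nat ->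
    exists phi x, strictly_increasing phi /\
      forall i : 'I_n, (i < j)%nat -> Un_cv (fun k => u (phi k) i) (x i).
  by exists phi, x; split => //; apply: coord_vec_cv => i; apply: Hx.
elim=> [|j IH] Hjn; first by exists id, (fun _ => 0); split => // k.
case: (IH (ltnW Hjn)) => phi [x [Hphi Hx]].
pose i0 := Ordinal Hjn.
case: (bounded_real_subseq_cv (v := fun k => u (phi k) i0) (R0 := R0)).
  by move=> k; apply: Rle_trans (Rabs_coord_le_norm _ _) (Hb _).
move=> l [psi [Hpsi Hl]].
exists (phi \o psi), (fun i => if i == i0 then l else x i); split.
  exact: strictly_increasing_comp.
move=> i Hi; case: eqP => [->|Hne]; first exact: Hl.
apply: (Un_cv_subseq (u := fun k => u (phi k) i)) Hpsi _; apply: Hx.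
rewrite ltnS leq_eqVlt in Hi; case/orP: Hi => [/eqP Hi|//].
by case: Hne; apply: val_inj.
Qed.

Lemma bounded_cluster_point_frequently u R0 (Q : nat -> Prop) :
  (forall k, norm (u k) <= R0) -> (forall K, exists k, (K <= k)%nat /\ Q k) ->
  exists x, forall eps, 0 < eps -> forall K,
    exists k, (K <= k)%nat /\ Q k /\ norm (vsub (u k) x) < eps.
Proof.
move=> Hb HQ.
case: (extract_increasing (P := fun _ p => Q p)) => [k K|psi [Hpsi HQpsi]]; first exact: HQ.
case: (bounded_vec_subseq_cv (u := fun k => u (psi k)) (fun k => Hb (psi k))) => phi [x [Hphi Hx]].
exists x => eps He K; case: (vec_cv_eventually Hx He) => K1 HK1.
exists (psi (phi (maxn K K1))); split; last split.
- apply: leq_trans (strictly_increasing_ge (strictly_increasing_comp Hpsi Hphi) _); exact: leq_maxl.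
- exact: HQpsi.
- by apply: HK1; apply: leq_maxr.
Qed.

End VectorSequences.

(** * Bounded sequences with vanishing steps *)

Lemma first_exit (P : nat -> Prop) k m : (k <= m)%nat -> P k -> ~ P m ->
  exists j, (k < j <= m)%nat /\ P j.-1 /\ ~ P j.
Proof.
elim: m => [|m IH] k_le_m Pk notPm; first by move: k_le_m; rewrite leqn0 => /eqP k0; subst k.
case: (classic (P m)) => Pm.
  exists m.+1; rewrite leqnn andbT ltnS; split => //.
  by rewrite leq_eqVlt in k_le_m; case/orP: k_le_m => [/eqP k_eq|//]; subst k.
rewrite leq_eqVlt in k_le_m; case/orP: k_le_m => [/eqP k_eq|k_lt_m]; first by subst k.
by case: (IH k_lt_m Pk Pm) => j [/andP [kj jm] Pj]; exists j; rewrite kj (leqW jm).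
Qed.

Section BoundedSequence.
Context {n : nat}.
Variables (u : nat -> vec n) (R0 : R).
Hypothesis u_bounded : forall k, norm (u k) <= R0.

Lemma accum_pt_frequently (Q : nat -> Prop) : (forall K, exists k, (K <= k)%nat /\ Q k) ->
  exists x, accum_pt u x /\
    forall eps, 0 < eps -> forall K, exists k, (K <= k)%nat /\ Q k /\ norm (vsub (u k) x) < eps.
Proof.
move=> HQ; case: (bounded_cluster_point_frequently u_bounded HQ) => x Hx.
exists x; split => // eps eps_pos K.
by case: (Hx eps eps_pos K) => k [Hk [_ close]]; exists k.
Qed.

Lemma accum_pt_norm_le x : accum_pt u x -> norm x <= R0.
Proof.
move=> Hx; apply: le_epsilon => eps eps_pos; case: (Hx eps eps_pos 0%nat) => k [_ close].
by have := norm_le_sub_add x (u k); rewrite norm_sub_sym; have := u_bounded k; lra.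
Qed.

Lemma accum_pt_dist_to_0 (U : vec n -> Prop) :
  (forall x, accum_pt u x -> U x) -> dist_to_0 u U.
Proof.
move=> HU eps eps_pos; apply: NNPP => never_close.
have far : forall K, exists k, (K <= k)%nat /\ ~ (exists y, U y /\ norm (vsub (u k) y) < eps).
  move=> K; apply: NNPP => HK; apply: never_close; exists K => k Hk.
  by apply: NNPP => Hk'; apply: HK; exists k.
case: (accum_pt_frequently far) => x [Hx Hxu].
case: (Hxu eps eps_pos 0%nat) => k [_ [Hk close]].
by apply: Hk; exists x; split => //; apply: HU.
Qed.

Lemma accum_pts_separated (U1 U2 : vec n -> Prop) :
  closed_vset U1 -> closed_vset U2 -> (forall x, ~ (U1 x /\ U2 x)) ->
  exists delta, 0 < delta /\ forall a b, accum_pt u a -> U1 a -> accum_pt u b -> U2 b ->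
    delta <= norm (vsub a b).
Proof.
(* Otherwise pairs of accumulation points a_k in U1, b_k in U2 with |a_k - b_k| -> 0 have a
   common cluster point, which lies in both closed sets. *)
move=> U1_closed U2_closed disj; apply: NNPP => not_sep.
have near k : exists p : vec n * vec n,
    (accum_pt u p.1 /\ U1 p.1) /\ (accum_pt u p.2 /\ U2 p.2) /\ norm (vsub p.1 p.2) < / INR k.+1.
  apply: NNPP => Hk; apply: not_sep; exists (/ INR k.+1); split.
    by apply/Rinv_0_lt_compat/lt_0_INR/ltP.
  move=> a b Ha Ua Hb Ub; apply: Rnot_lt_le => ab_close; apply: Hk; by exists (a, b).
case: (choice _ near) => ab ab_spec.
case: (bounded_cluster_point_frequently (u := fun k => (ab k).1) (R0 := R0) (Q := fun _ => True)).
- by move=> k; apply: accum_pt_norm_le; case: (ab_spec k) => [[]].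
- by move=> K; exists K.
move=> x Hx; apply: (disj x); split.
  apply: U1_closed => eps eps_pos; case: (Hx eps eps_pos 0%nat) => k [_ [_ close]].
  by exists (ab k).1; split; [case: (ab_spec k) => [[]] | rewrite norm_sub_sym].
apply: U2_closed => eps eps_pos.
case: (inv_INR_succ_le_lt (eps := eps / 2) ltac:(lra)) => K small.
case: (Hx (eps / 2) ltac:(lra) K) => k [Hk [_ close]].
case: (ab_spec k) => _ [[_ U2b] ab_close]; exists (ab k).2; split => //.
have := small k Hk; have := norm_sub_triangle x (ab k).1 (ab k).2.
by rewrite (norm_sub_sym x (ab k).1); lra.
Qed.

Hypothesis u_steps_cv0 : Un_cv (fun k => norm (vsub (u k.+1) (u k))) 0.

(** Ostrowski's argument: small steps cannot jump between two separated sets of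
    accumulation points, so infinitely many iterates stay away from both. *)
Lemma accum_pts_one_side (U1 U2 : vec n -> Prop) :
  closed_vset U1 -> closed_vset U2 -> (forall x, ~ (U1 x /\ U2 x)) ->
  (forall x, accum_pt u x -> U1 x \/ U2 x) ->
  (forall x, accum_pt u x -> U1 x) \/ (forall x, accum_pt u x -> U2 x).
Proof.
move=> U1_closed U2_closed disj cover.
case: (classic (exists x1, accum_pt u x1 /\ U1 x1)) => [[x1 [acc1 U1x1]]|no1]; last first.
  by right=> x Hx; case: (cover x Hx) => // U1x; case: no1; exists x.
left=> x2 acc2; case: (cover x2 acc2) => // U2x2; exfalso.
case: (accum_pts_separated U1_closed U2_closed disj) => delta [delta_pos sep].
pose S1 y := exists a, accum_pt u a /\ U1 a /\ norm (vsub y a) < delta / 3.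
pose S2 y := exists b, accum_pt u b /\ U2 b /\ norm (vsub y b) < delta / 3.
have S12 y : S1 y -> S2 y -> False.
  move=> [a [acc_a [U1a ya]]] [b [acc_b [U2b yb]]].
  have := sep a b acc_a U1a acc_b U2b; have := norm_sub_triangle a y b.
  by rewrite (norm_sub_sym a y); lra.
case: (Un_cv_eventually u_steps_cv0 (eps := delta / 3) ltac:(lra)) => K0 small_step.
have outside K : exists j, (K <= j)%nat /\ ~ S1 (u j) /\ ~ S2 (u j).
  case: (acc1 (delta / 3) ltac:(lra) (maxn K K0)) => k [Kk uk_x1].
  case: (acc2 (delta / 3) ltac:(lra) k) => m [km um_x2].
  have S2m : S2 (u m) by exists x2.
  have [j [/andP [kj jm] [S1j notS1j]]] :=
    first_exit (P := fun j => S1 (u j)) km (ex_intro _ x1 (conj acc1 (conj U1x1 uk_x1)))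
      (fun S1m => S12 _ S1m S2m).
  exists j; split; first exact: leq_trans (leq_maxl K K0) (leq_trans Kk (ltnW kj)).
  split => // -[b [acc_b [U2b jb]]]; case: S1j => a [acc_a [U1a ja]].
  have step : norm (vsub (u j) (u j.-1)) < delta / 3.
    have j_pos : (0 < j)%nat := leq_ltn_trans (leq0n k) kj.
    have := small_step j.-1 (leq_trans (leq_maxr K K0) (leq_trans Kk _)).
    rewrite prednK // Rminus_0_r Rabs_right; last exact/Rle_ge/norm_ge0.
    by apply; rewrite -ltnS prednK.
  have := sep a b acc_a U1a acc_b U2b.
  have := norm_sub_triangle a (u j.-1) (u j); have := norm_sub_triangle a (u j) b.
  by rewrite (norm_sub_sym a (u j.-1)) (norm_sub_sym (u j.-1) (u j)); lra.
case: (accum_pt_frequently outside) => x [acc_x close].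
case: (close (delta / 3) ltac:(lra) 0%nat) => j [_ [[notS1 notS2] ujx]].
by case: (cover x acc_x) => [U1x | U2x]; [apply: notS1 | apply: notS2]; exists x.
Qed.

End BoundedSequence.

(** * The linearized model *)

Lemma le0_of_le_vanishing_mul a c : (forall t, 0 < t <= 1 -> a <= t * c) -> a <= 0.
Proof.
move=> H; apply: Rnot_lt_le => a_pos.
have c1_pos : 0 < Rabs c + 1 by have := Rabs_pos c; lra.
set t := Rmin 1 (a / (2 * (Rabs c + 1))).
have t_pos : 0 < t by apply: Rmin_pos; [lra | apply: Rdiv_lt_0_compat; lra].
have t_small : t * (Rabs c + 1) <= a / 2.
  have -> : a / 2 = a / (2 * (Rabs c + 1)) * (Rabs c + 1) by field; lra.
  by apply: Rmult_le_compat_r; [lra | apply: Rmin_r].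
have := H t (conj t_pos (Rmin_l _ _)); have := Rle_abs c; nra.
Qed.

Section Convexity.
Context {n : nat}.
Implicit Types u v : vec n.

Lemma half_sqr_norm_convex u v w : 0 <= w <= 1 ->
  / 2 * norm (vadd u (vscale w v)) ^ 2 <=
  (1 - w) * (/ 2 * norm u ^ 2) + w * (/ 2 * norm (vadd u v) ^ 2).
Proof.
move=> w01; rewrite !sqr_norm_add normZ dotZr Rabs_right; last lra.
have : 0 <= w * (1 - w) * norm v ^ 2 by apply: Rmult_le_pos; [nra | apply: pow2_ge_0].
nra.
Qed.

Lemma half_sqr_norm_le u v : / 2 * norm u ^ 2 <= / 2 * norm v ^ 2 + norm u * norm (vsub u v).
Proof.
have -> : norm u ^ 2 = norm v ^ 2 + 2 * dot u (vsub u v) - norm (vsub u v) ^ 2.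
  by rewrite !sqr_norm !dotBl !dotBr (dotC v u); ring.
by have := dot_le_norm u (vsub u v); have := pow2_ge_0 (norm (vsub u v)); lra.
Qed.

End Convexity.

Lemma in_dom_fin n (F : vec n -> Rbar) x : in_dom F x -> exists r, F x = Fin r.
Proof. by rewrite /in_dom; case: (F x) => [r|] // _; exists r. Qed.

Section Linearization.
Context {N M : nat} (F : vec N -> Rbar) (A : vec N -> vec M) (jac : vec N -> mat M N).

Lemma Jfun_fin x j : Jfun A F x = Fin j -> exists f, F x = Fin f /\ j = / 2 * norm (A x) ^ 2 + f.
Proof. by rewrite /Jfun; case: (F x) => [f|] //= [<-]; exists f. Qed.

Lemma Jlin_fin z x j : Jlin A jac F z x = Fin j ->
  exists f, F x = Fin f /\ j = / 2 * norm (linA A jac z x) ^ 2 + f.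
Proof. by rewrite /Jlin; case: (F x) => [f|] //= [<-]; exists f. Qed.

Lemma linA_step z x t :
  linA A jac z (vadd z (vscale t (vsub x z))) = vadd (A z) (vscale t (mv (jac z) (vsub x z))).
Proof.
rewrite /linA -mvZ; congr (vadd _ (mv _ _)).
by apply: vecP => i; rewrite /vsub /vadd /vscale; ring.
Qed.

Lemma Jlin_sufficient_decrease rho beta z xt e Gam :
  hypA A jac F rho beta z xt e Gam ->
  Rbar_le (Rbar_addR (beta / 2 * norm (vsub xt z) ^ 2) (Jlin A jac F z xt)) (Jfun A F z).
Proof.
case=> z_dom [[j [Jxt _]] [e_small [_ [Gam_coercive Fineq]]]].
case: (in_dom_fin z_dom) => fz Fz; case: (Jlin_fin Jxt) => fx [Fxt _].
move: Fineq; rewrite /Jlin /Jfun Fxt Fz /qvec /linA; cbn [Rbar_addR Rbar_le].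
set h := vsub xt z in e_small *; set Bh := mv (jac z) h.
have -> : vsub z xt = vscale (-1) h by apply: vecP => i; rewrite /h /vsub /vscale; ring.
have Gh := Gam_coercive h; rewrite dot_mtv -/Bh in Gh.
have e_h : dot e h <= rho * norm h ^ 2.
  by apply: Rle_trans (dot_le_norm e h) _; have := norm_ge0 h; nra.
rewrite /qform mvZ !dotZl !dotZr dotBl dot_mtv -/Bh dotDl sqr_norm_add (sqr_norm Bh).
rewrite /qform in Gh; lra.
Qed.

Lemma subdiff_Jlin_subdiff z xt e : convex_fun F ->
  subdiff (Jlin A jac F z) xt e -> subdiff F xt (qvec A jac z xt e).
Proof.
move=> Fconv [j [Jxt e_sub]]; case: (Jlin_fin Jxt) => fx [Fxt Ej].
exists fx; split => // y; case Fy: (F y) => [fy|] //=.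
(* Compare J_k along the segment from xt to y: its quadratic part only contributes O(t^2). *)
set c := linA A jac z xt; set d := vsub y xt; set Bd := mv (jac z) d.
have -> : dot (qvec A jac z xt e) d = dot e d - dot c Bd by rewrite /qvec dotBl dot_mtv.
suff : dot e d - dot c Bd - (fy - fx) <= 0 by lra.
apply: (le0_of_le_vanishing_mul (c := / 2 * norm Bd ^ 2)) => t t01.
pose yt := vadd xt (vscale t d).
have yt_conv : vadd (vscale t y) (vscale (1 - t) xt) = yt.
  by apply: vecP => i; rewrite /yt /d /vsub /vadd /vscale; ring.
have yt_xt : vsub yt xt = vscale t d.
  by apply: vecP => i; rewrite /yt /vsub /vadd /vscale; ring.
have lin_yt : linA A jac z yt = vadd c (vscale t Bd).
  rewrite {1}/linA; have -> : vsub yt z = vadd (vsub xt z) (vscale t d).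
    by apply: vecP => i; rewrite /yt /vsub /vadd /vscale; ring.
  by rewrite mvD mvZ /c /linA; apply: vecP => i; rewrite /vadd /vscale /Bd; ring.
have := Fconv y xt fy fx t Fy Fxt ltac:(lra); rewrite yt_conv.
have := e_sub yt; rewrite /Jlin lin_yt yt_xt dotZr.
case: (F yt) => [fyt|] //; cbn [Rbar_addR Rbar_le].
rewrite sqr_norm_add normZ dotZr Rabs_right; last lra.
rewrite Ej -/c => J_ineq F_ineq.
apply: (Rmult_le_reg_l t); first lra.
have : 0 <= t * (t * norm Bd ^ 2).
  by apply: Rmult_le_pos; [lra | apply: Rmult_le_pos; [lra | apply: pow2_ge_0]].
nra.
Qed.

Lemma relaxed_step_bound z xt w d C Amax fz fx :
  convex_fun F -> F z = Fin fz -> F xt = Fin fx -> 0 <= w <= 1 ->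
  w * norm (vsub xt z) <= d ->
  (forall x, in_dom F x -> norm (vsub x z) <= d ->
     norm (vsub (vsub (A x) (A z)) (mv (jac z) (vsub x z))) <= C * norm (vsub x z) ^ 2) ->
  (forall x, in_dom F x -> norm (A x) <= Amax) ->
  exists jn, Jfun A F (vadd (vscale (1 - w) z) (vscale w xt)) = Fin jn /\
    jn <= (1 - w) * (/ 2 * norm (A z) ^ 2 + fz) + w * (/ 2 * norm (linA A jac z xt) ^ 2 + fx)
          + C * Amax * w ^ 2 * norm (vsub xt z) ^ 2.
Proof.
move=> Fconv Fz Fxt w01 step_d taylor A_bounded.
set h := vsub xt z in step_d *; set zn := vadd (vscale (1 - w) z) (vscale w xt).
have zn_z : vsub zn z = vscale w h.
  by apply: vecP => i; rewrite /zn /h /vsub /vadd /vscale; ring.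
have zn_step : zn = vadd z (vscale w h).
  by apply: vecP => i; rewrite /zn /h /vsub /vadd /vscale; ring.
have := Fconv z xt fz fx (1 - w) Fz Fxt ltac:(lra).
rewrite (_ : 1 - (1 - w) = w); last ring.
rewrite -/zn; case Fzn: (F zn) => [fzn|] //= Fzn_le.
have zn_dom : in_dom F zn by rewrite /in_dom Fzn.
have norm_zn_z : norm (vsub zn z) = w * norm h by rewrite zn_z normZ Rabs_right; lra.
have A_taylor : norm (vsub (A zn) (linA A jac z zn)) <= C * (w * norm h) ^ 2.
  have -> : vsub (A zn) (linA A jac z zn) = vsub (vsub (A zn) (A z)) (mv (jac z) (vsub zn z)).
    by apply: vecP => i; rewrite /linA /vsub /vadd; ring.
  by rewrite -norm_zn_z; apply: taylor => //; rewrite norm_zn_z.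
have lin_convex := half_sqr_norm_convex (A z) (mv (jac z) h) w01.
rewrite -linA_step -/h -zn_step -[vadd (A z) _]/(linA A jac z xt) in lin_convex.
have := half_sqr_norm_le (A zn) (linA A jac z zn).
have := A_bounded zn zn_dom; have := norm_ge0 (A zn).
have := norm_ge0 (vsub (A zn) (linA A jac z zn)) => ? ? ? ?.
exists (/ 2 * norm (A zn) ^ 2 + fzn); split; first by rewrite /Jfun Fzn.
have : norm (A zn) * norm (vsub (A zn) (linA A jac z zn)) <= Amax * (C * (w * norm h) ^ 2).
  by apply: Rmult_le_compat.
nra.
Qed.

End Linearization.

(** * Limits of subgradients *)

(** The junk value at [PInf] is never used: below it is only applied to finite values. *)
Definition Rbar_fin (x : Rbar) : R := if x is Fin r then r else 0.

Section SubdiffLimit.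
Context {n : nat} (F : vec n -> Rbar).
Variables (x g : nat -> vec n) (xh gh : vec n) (fh : R).
Hypothesis Flsc : lsc_fun F.
Hypothesis F_xh : F xh = Fin fh.
Hypothesis g_subdiff : forall k, subdiff F (x k) (g k).
Hypothesis x_cv : vec_cv x xh.
Hypothesis g_cv : forall i, Un_cv (fun k => g k i) (gh i).

Lemma subdiff_fin k : F (x k) = Fin (Rbar_fin (F (x k))).
Proof. by case: (g_subdiff k) => f [-> _]. Qed.

Lemma subdiff_ineq k y :
  Rbar_le (Fin (Rbar_fin (F (x k)) + dot (g k) (vsub y (x k)))) (F y).
Proof. by case: (g_subdiff k) => f [Fxk sub]; rewrite Fxk. Qed.

Lemma subdiff_dot_cv y : Un_cv (fun k => dot (g k) (vsub y (x k))) (dot gh (vsub y xh)).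
Proof.
apply: Un_cv_dot => // i.
by apply: CV_minus; [apply: Un_cv_const | apply: vec_cv_coord].
Qed.

Lemma subdiff_value_cv : Un_cv (fun k => Rbar_fin (F (x k))) fh.
Proof.
move=> eta eta_pos.
case: (@Flsc xh (fh - eta) ltac:(rewrite F_xh /=; lra)) => delta [delta_pos near_gt].
case: (vec_cv_eventually x_cv delta_pos) => K1 HK1.
case: (Un_cv_eventually (subdiff_dot_cv xh) eta_pos) => K2 HK2.
exists (maxn K1 K2) => k /leP Hk; rewrite /R_dist.
have := near_gt _ (HK1 k (leq_trans (leq_maxl _ _) Hk)); rewrite subdiff_fin /=.
have := HK2 k (leq_trans (leq_maxr _ _) Hk).
have := subdiff_ineq k xh; rewrite F_xh /=.
have -> : dot gh (vsub xh xh) = 0 by rewrite dotBr; ring.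
rewrite Rminus_0_r => ? /Rabs_def2 ? ?.
by apply: Rabs_def1; lra.
Qed.

Lemma subdiff_limit : subdiff F xh gh.
Proof.
exists fh; split => // y; case Fy: (F y) => [fy|] //=.
apply: (Un_cv_le (u := fun k => Rbar_fin (F (x k)) + dot (g k) (vsub y (x k)))).
  by apply: CV_plus; [apply: subdiff_value_cv | apply: subdiff_dot_cv].
by move=> k; have := subdiff_ineq k y; rewrite Fy.
Qed.

End SubdiffLimit.

(** * The relaxed iteration *)

Section Iteration.
Context {N M : nat} (F : vec N -> Rbar) (A : vec N -> vec M) (jac : vec N -> mat M N).
Variables (Jz0 d C Amax infF rho beta eps w : R) (z xt e : nat -> vec N) (Gam : nat -> mat N N).
Hypothesis Fconv : convex_fun F.
Hypothesis Flsc : lsc_fun F.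
Hypothesis A_C1 : C1_on_dom F A jac.
Hypothesis F_ge_infF : forall x, Rbar_le (Fin infF) (F x).
Hypothesis A_le_Amax : forall x, in_dom F x -> norm (A x) <= Amax.
Hypothesis sublevel_bounded : bounded_set (fun x => Rbar_le (Jfun A F x) (Fin Jz0)).
Hypothesis taylor : forall y x, Rbar_le (Jfun A F y) (Fin Jz0) -> in_dom F x ->
  norm (vsub x y) <= d ->
  norm (vsub (vsub (A x) (A y)) (mv (jac y) (vsub x y))) <= C * norm (vsub x y) ^ 2.
Hypothesis beta_pos : 0 < beta.
Hypothesis eps_pos : 0 < eps.
Hypothesis w01 : 0 < w <= 1.
Hypothesis step_d : w * sqrt (2 / beta * (Jz0 - infF)) <= d.
Hypothesis w_small : 2 * C * Amax * w <= beta - eps.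
Hypothesis J_z0 : Jfun A F (z 0%nat) = Fin Jz0.
Hypothesis z_next : forall k, z k.+1 = vadd (vscale (1 - w) (z k)) (vscale w (xt k)).
Hypothesis hypA_k : forall k, hypA A jac F rho beta (z k) (xt k) (e k) (Gam k).

Definition Jz k := Rbar_fin (Jfun A F (z k)).
Definition Jk k := Rbar_fin (Jlin A jac F (z k) (xt k)).
Definition Fxt k := Rbar_fin (F (xt k)).
Definition dxz k := norm (vsub (xt k) (z k)).

Lemma descent_step k j : Jfun A F (z k) = Fin j -> j <= Jz0 ->
  exists jn jl,
    Jfun A F (z k.+1) = Fin jn /\ Jlin A jac F (z k) (xt k) = Fin jl /\
    infF <= jl /\ beta / 2 * dxz k ^ 2 + jl <= j /\
    jn <= (1 - w) * j + w * jl + C * Amax * w ^ 2 * dxz k ^ 2 /\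
    jn <= j - w * eps / 2 * dxz k ^ 2.
Proof.
move=> Jzk j_le.
have := Jlin_sufficient_decrease (hypA_k k); rewrite Jzk.
case Jl: (Jlin A jac F (z k) (xt k)) => [jl|] //; cbn [Rbar_addR Rbar_le].
rewrite -/(dxz k) => decrease.
case: (Jlin_fin Jl) => fx [Fxt_k Ejl]; case: (Jfun_fin Jzk) => fz [Fz_k Ej].
have infF_jl : infF <= jl.
  have := F_ge_infF (xt k); rewrite Fxt_k /=.
  by have := pow2_ge_0 (norm (linA A jac (z k) (xt k))); lra.
(* Part (a) bounds the step a priori: beta/2 |h|^2 <= J(z^k) - inf F <= J(z^0) - inf F. *)
have step_small : w * dxz k <= d.
  apply: Rle_trans step_d; apply: Rmult_le_compat_l; first lra.
  rewrite -(sqrt_pow2 (dxz k)); last exact: norm_ge0.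
  apply: sqrt_le_1_alt; apply: (Rmult_le_reg_l (beta / 2)); first lra.
  by rewrite (_ : beta / 2 * (2 / beta * (Jz0 - infF)) = Jz0 - infF); [lra | field; lra].
have Jzk_le : Rbar_le (Jfun A F (z k)) (Fin Jz0) by rewrite Jzk.
case: (relaxed_step_bound Fconv Fz_k Fxt_k (conj (Rlt_le _ _ (proj1 w01)) (proj2 w01)) step_small
         (fun x => taylor (x := x) Jzk_le) A_le_Amax) => jn [Jzn jn_le].
rewrite -Ej -Ejl -/(dxz k) in jn_le.
exists jn, jl; rewrite z_next; do 5!split => //.
have : 0 <= w * dxz k ^ 2 * (beta - eps - 2 * C * Amax * w).
  by apply: Rmult_le_pos; [apply: Rmult_le_pos; [lra | apply: pow2_ge_0] | lra].
nra.
Qed.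

Lemma Jz_fin_le k : Jfun A F (z k) = Fin (Jz k) /\ Jz k <= Jz0.
Proof.
elim: k => [|k [IHfin IHle]]; first by rewrite /Jz J_z0 /=; split => //; lra.
case: (descent_step IHfin IHle) => jn [jl [Jzn [_ [_ [_ [_ jn_le]]]]]].
rewrite /Jz Jzn /=; split => //.
suff : 0 <= w * eps / 2 * dxz k ^ 2 by lra.
by apply: Rmult_le_pos; [have := w01; nra | apply: pow2_ge_0].
Qed.

Lemma iterate_step k :
  Jlin A jac F (z k) (xt k) = Fin (Jk k) /\ infF <= Jk k /\
  beta / 2 * dxz k ^ 2 + Jk k <= Jz k /\
  Jz k.+1 <= (1 - w) * Jz k + w * Jk k + C * Amax * w ^ 2 * dxz k ^ 2 /\
  Jz k.+1 <= Jz k - w * eps / 2 * dxz k ^ 2.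
Proof.
case: (Jz_fin_le k) => Jzk Jzk_le.
case: (descent_step Jzk Jzk_le) => jn [jl [Jzn [Jl step]]].
by rewrite /Jk /Jz Jzn Jl /=; rewrite /Jz Jzk /= in step.
Qed.

Lemma Jz_decreasing k : Jz k.+1 <= Jz k.
Proof.
have [_ [_ [_ [_ ]]]] := iterate_step k.
suff : 0 <= w * eps / 2 * dxz k ^ 2 by lra.
by apply: Rmult_le_pos; [have := w01; nra | apply: pow2_ge_0].
Qed.

Lemma Jz_ge_infF k : infF <= Jz k.
Proof.
have [_ [infF_le [decrease _]]] := iterate_step k.
by have := pow2_ge_0 (dxz k); nra.
Qed.

Lemma Jz_has_lb : has_lb Jz.
Proof. by exists (- infF) => x [k ->]; rewrite /opp_seq; have := Jz_ge_infF k; lra. Qed.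

Definition Jlim : R := proj1_sig (@decreasing_cv Jz Jz_decreasing Jz_has_lb).

Lemma Jz_cv : Un_cv Jz Jlim.
Proof. exact: proj2_sig (@decreasing_cv Jz Jz_decreasing Jz_has_lb). Qed.

Lemma Jz_diff_cv0 : Un_cv (fun k => Jz k - Jz k.+1) 0.
Proof.
rewrite -(Rminus_diag_eq Jlim Jlim) //.
by apply: CV_minus; [apply: Jz_cv | apply: (Un_cv_subseq (phi := S)) Jz_cv].
Qed.

Lemma dxz_cv0 : Un_cv dxz 0.
Proof.
apply: Un_cv_sqr0 => [k|]; first exact: norm_ge0.
have we_pos : 0 < w * eps by have := w01; nra.
apply: (Un_cv_squeeze0 (v := fun k => 2 / (w * eps) * (Jz k - Jz k.+1)) (K := 0%nat)).
  move=> k _; split; first exact: pow2_ge_0.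
  have [_ [_ [_ [_ decrease]]]] := iterate_step k.
  apply: (Rmult_le_reg_l (w * eps / 2)); first lra.
  by rewrite (_ : w * eps / 2 * (2 / (w * eps) * _) = Jz k - Jz k.+1); [lra | field; lra].
rewrite -(Rmult_0_r (2 / (w * eps))).
by apply: CV_mult; [apply: Un_cv_const | apply: Jz_diff_cv0].
Qed.

Lemma Jk_cv : Un_cv Jk Jlim.
Proof.
have gap_cv : Un_cv (fun k => Jz k - Jk k) 0.
  apply: (Un_cv_squeeze0 (K := 0%nat)
    (v := fun k => / w * (Jz k - Jz k.+1 + C * Amax * w ^ 2 * (dxz k * dxz k)))).
    move=> k _; have [_ [_ [decrease [relaxed _]]]] := iterate_step k; split.
      by have := pow2_ge_0 (dxz k); nra.
    apply: (Rmult_le_reg_l w); first lra.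
    by rewrite -Rmult_assoc Rinv_r; [simpl in *; lra | lra].
  rewrite (_ : 0 = / w * (0 + C * Amax * w ^ 2 * (0 * 0))); last ring.
  apply: CV_mult; first exact: Un_cv_const.
  apply: CV_plus; first exact: Jz_diff_cv0.
  by apply: CV_mult; [apply: Un_cv_const | apply: CV_mult; apply: dxz_cv0].
rewrite -(Rminus_0_r Jlim).
apply: (Un_cv_ext (fun k => Jz k - (Jz k - Jk k))) => [k|]; first ring.
exact: CV_minus Jz_cv gap_cv.
Qed.

Lemma z_step_cv0 : Un_cv (fun k => norm (vsub (z k.+1) (z k))) 0.
Proof.
apply: (Un_cv_ext (fun k => w * dxz k)) => [k|].
  have -> : vsub (z k.+1) (z k) = vscale w (vsub (xt k) (z k)).
    by apply: vecP => i; rewrite z_next /vsub /vadd /vscale; ring.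
  by rewrite normZ Rabs_right //; lra.
by rewrite -(Rmult_0_r w); apply: CV_mult; [apply: Un_cv_const | apply: dxz_cv0].
Qed.

Lemma z_sublevel k : Rbar_le (Jfun A F (z k)) (Fin Jz0).
Proof. by case: (Jz_fin_le k) => -> /=. Qed.

Lemma F_z_le k : exists f, F (z k) = Fin f /\ f <= Jz0.
Proof.
case: (Jz_fin_le k) => /Jfun_fin [f [Fzk ->]] Jz_le.
by exists f; split => //; have := pow2_ge_0 (norm (A (z k))); lra.
Qed.

Lemma z_in_dom k : in_dom F (z k).
Proof. by case: (F_z_le k) => f [Fzk _]; rewrite /in_dom Fzk. Qed.

Lemma Jk_split k :
  F (xt k) = Fin (Fxt k) /\ Jk k = / 2 * norm (linA A jac (z k) (xt k)) ^ 2 + Fxt k.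
Proof.
have [/Jlin_fin [f [Fx ->]] _] := iterate_step k.
by rewrite /Fxt Fx.
Qed.

Lemma qvec_subdiff k : subdiff F (xt k) (qvec A jac (z k) (xt k) (e k)).
Proof. by case: (hypA_k k) => _ [Jsub _]; apply: subdiff_Jlin_subdiff. Qed.

Section AccumulationPoint.
Variables (phi : nat -> nat) (xh : vec N).
Hypothesis phi_incr : strictly_increasing phi.
Hypothesis z_phi_cv : vec_cv (fun k => z (phi k)) xh.

Lemma accum_in_dom : in_dom F xh.
Proof.
move=> F_xh.
case: (@Flsc xh Jz0 ltac:(by rewrite F_xh)) => delta [delta_pos near_gt].
case: (vec_cv_eventually z_phi_cv delta_pos) => K HK.
case: (F_z_le (phi K)) => f [Fz f_le].
by have := near_gt _ (HK K (leqnn _)); rewrite Fz /=; lra.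
Qed.

Lemma xt_phi_cv : vec_cv (fun k => xt (phi k)) xh.
Proof.
apply: (Un_cv_squeeze0 (v := fun k => dxz (phi k) + norm (vsub (z (phi k)) xh)) (K := 0%nat)).
  by move=> k _; split; [apply: norm_ge0 | apply: norm_sub_triangle].
rewrite -(Rplus_0_r 0); apply: CV_plus => //.
exact: Un_cv_subseq dxz_cv0.
Qed.

Lemma A_phi_cv i : Un_cv (fun k => A (z (phi k)) i) (A xh i).
Proof.
apply: (vec_cv_coord (u := fun k => A (z (phi k)))); case: A_C1 => A_diff _.
case: (A_diff xh accum_in_dom 1 Rlt_0_1) => delta [delta_pos A_lin].
case: (mv_bounded (jac xh)) => K0 [K0_ge0 K0_bound].
case: (vec_cv_eventually z_phi_cv delta_pos) => K HK.
apply: (Un_cv_squeeze0 (v := fun k => (1 + K0) * norm (vsub (z (phi k)) xh)) (K := K)).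
  move=> k Hk; split; first exact: norm_ge0.
  have := A_lin _ (@z_in_dom (phi k)) (HK k Hk); have := K0_bound (vsub (z (phi k)) xh).
  have := norm_le_sub_add (vsub (A (z (phi k))) (A xh)) (mv (jac xh) (vsub (z (phi k)) xh)).
  lra.
by rewrite -(Rmult_0_r (1 + K0)); apply: CV_mult; [apply: Un_cv_const | apply: z_phi_cv].
Qed.

Lemma jac_phi_cv i j : Un_cv (fun k => jac (z (phi k)) i j) (jac xh i j).
Proof.
move=> eta eta_pos; case: A_C1 => _ jac_cont.
case: (jac_cont xh accum_in_dom eta eta_pos) => delta [delta_pos jac_near].
case: (vec_cv_eventually z_phi_cv delta_pos) => K HK.
by exists K => k /leP Hk; apply: jac_near (@z_in_dom (phi k)) (HK k Hk) i j.
Qed.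

Lemma linA_phi_cv i : Un_cv (fun k => linA A jac (z (phi k)) (xt (phi k)) i) (A xh i).
Proof.
have step_cv := norm_cv0_coord (Un_cv_subseq phi_incr dxz_cv0).
rewrite /linA /vadd -[A xh i]Rplus_0_r; apply: CV_plus; first exact: A_phi_cv.
have -> : 0 = \big[Rplus/0]_(j < N) (jac xh i j * 0) by rewrite big1 // => j _; ring.
apply: (Un_cv_sum (F := fun k j => jac (z (phi k)) i j * vsub (xt (phi k)) (z (phi k)) j)
                  (l := fun j => jac xh i j * 0)) => j.
by apply: CV_mult; [apply: jac_phi_cv | apply: step_cv].
Qed.

Lemma qvec_phi_cv j : Un_cv (fun k => qvec A jac (z (phi k)) (xt (phi k)) (e (phi k)) j)
                             (vscale (-1) (mtv (jac xh) (A xh)) j).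
Proof.
have e_cv : Un_cv (fun k => norm (e (phi k))) 0.
  apply: (Un_cv_squeeze0 (v := fun k => rho * dxz (phi k)) (K := 0%nat)).
    by move=> k _; split; [apply: norm_ge0 | case: (hypA_k (phi k)) => _ [_ []]].
  rewrite -(Rmult_0_r rho); apply: CV_mult; first exact: Un_cv_const.
  exact: Un_cv_subseq dxz_cv0.
have -> : vscale (-1) (mtv (jac xh) (A xh)) j = 0 - mtv (jac xh) (A xh) j by rewrite /vscale; ring.
rewrite /qvec /vsub /mtv; apply: CV_minus; first exact: (norm_cv0_coord e_cv j).
apply: (Un_cv_sum (F := fun k i => jac (z (phi k)) i j * linA A jac (z (phi k)) (xt (phi k)) i)
                  (l := fun i => jac xh i j * A xh i)) => i.
by apply: CV_mult; [apply: jac_phi_cv | apply: linA_phi_cv].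
Qed.

Lemma accum_clarke_critical : clarke_critical A jac F xh.
Proof.
case: (in_dom_fin accum_in_dom) => fh F_xh.
exact: (subdiff_limit Flsc F_xh (fun k => qvec_subdiff (phi k)) xt_phi_cv qvec_phi_cv).
Qed.

Lemma accum_value : Jfun A F xh = Fin Jlim.
Proof.
case: (in_dom_fin accum_in_dom) => fh F_xh.
have F_cv := subdiff_value_cv Flsc F_xh (fun k => qvec_subdiff (phi k)) xt_phi_cv qvec_phi_cv.
have Jk_phi_cv : Un_cv (fun k => Jk (phi k)) (/ 2 * dot (A xh) (A xh) + fh).
  apply: (Un_cv_ext (fun k => / 2 * dot (linA A jac (z (phi k)) (xt (phi k)))
                                       (linA A jac (z (phi k)) (xt (phi k))) + Fxt (phi k))).
    by move=> k; rewrite (Jk_split (phi k)).2 sqr_norm.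
  apply: CV_plus => //; apply: CV_mult; first exact: Un_cv_const.
  by apply: Un_cv_dot; apply: linA_phi_cv.
rewrite /Jfun F_xh; cbn [Rbar_addR].
by rewrite (UL_sequence _ _ _ (Un_cv_subseq phi_incr Jk_cv) Jk_phi_cv) sqr_norm.
Qed.

End AccumulationPoint.

Lemma z_bounded : exists R0, forall k, norm (z k) <= R0.
Proof. by case: sublevel_bounded => R0 HR0; exists R0 => k; apply: HR0; apply: z_sublevel. Qed.

Lemma accum_pt_critical xh : accum_pt z xh ->
  in_dom F xh /\ clarke_critical A jac F xh /\ Jfun A F xh = Fin Jlim.
Proof.
case/accum_pt_subseq => phi [phi_incr z_phi_cv].
split; first exact: accum_in_dom z_phi_cv.
by split; [apply: accum_clarke_critical phi_incr z_phi_cv | apply: accum_value phi_incr z_phi_cv].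
Qed.

Lemma iterates_converge :
  (forall k, Rbar_le (Jfun A F (z k.+1)) (Jfun A F (z k))) /\
  Rbar_cv (fun k => Jfun A F (z k)) Jlim /\
  (forall xh, accum_pt z xh -> clarke_critical A jac F xh /\ Jfun A F xh = Fin Jlim) /\
  (forall U1 U2 : vec N -> Prop,
     closed_vset U1 -> closed_vset U2 -> (forall x, ~ (U1 x /\ U2 x)) ->
     (forall x, (in_dom F x /\ clarke_critical A jac F x /\ Jfun A F x = Fin Jlim)
                <-> (U1 x \/ U2 x)) ->
     ((forall xh, accum_pt z xh -> U1 xh) /\ dist_to_0 z U1) \/
     ((forall xh, accum_pt z xh -> U2 xh) /\ dist_to_0 z U2)).
Proof.
case: z_bounded => R0 z_le.
split; [|split; [|split]].
- by move=> k; rewrite (Jz_fin_le k.+1).1 (Jz_fin_le k).1 /=; apply: Jz_decreasing.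
- move=> eta /(Un_cv_eventually Jz_cv) [K HK]; exists K => k Hk.
  by exists (Jz k); split; [apply: (Jz_fin_le k).1 | apply: HK].
- by move=> xh /accum_pt_critical [].
move=> U1 U2 U1_closed U2_closed disj V_split.
have cover x : accum_pt z x -> U1 x \/ U2 x by move/accum_pt_critical/V_split.
case: (accum_pts_one_side z_le z_step_cv0 U1_closed U2_closed disj cover) => all_in.
- by left; split => //; apply: accum_pt_dist_to_0 z_le _ all_in.
- by right; split => //; apply: accum_pt_dist_to_0 z_le _ all_in.
Qed.

End Iteration.

Theorem lemmaA1 (N M : nat) (F : vec N -> Rbar) (A : vec N -> vec M)
  (jac : vec N -> mat M N)
  (HFconv : convex_fun F) (HFproper : proper_fun F) (HFlsc : lsc_fun F)
  (HA : C1_on_dom F A jac) :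
  (* (a) *)
  (forall (rho beta : R) (z xt e : vec N) (Gam : mat N N),
     0 < rho -> 0 < beta ->
     hypA A jac F rho beta z xt e Gam ->
     Rbar_le (Rbar_addR (beta / 2 * norm (vsub xt z) ^ 2) (Jlin A jac F z xt))
             (Jfun A F z))
  /\
  (* (b) *)
  (forall (z0 : vec N) (d C Amax infF rho beta eps w : R)
          (z xt e : nat -> vec N) (Gam : nat -> mat N N),
     in_dom F z0 ->
     (* Assumption 2.1 for z0 *)
     bounded_set (fun x => Rbar_le (Jfun A F x) (Jfun A F z0)) ->
     is_inf_of F infF ->
     is_sup_normA F A Amax ->
     0 < d -> 0 < C ->
     (forall y x : vec N, Rbar_le (Jfun A F y) (Jfun A F z0) -> in_dom F x ->
        norm (vsub x y) <= d ->
        norm (vsub (vsub (A x) (A y)) (mv (jac y) (vsub x y))) <= C * norm (vsub x y) ^ 2) ->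
     0 < rho -> 0 < beta -> 0 < eps < beta ->
     0 < w <= 1 ->
     (forall Jz0 : R, Jfun A F z0 = Fin Jz0 ->
        w * sqrt ((2 / beta) * (Jz0 - infF)) <= d) ->
     2 * C * Amax * w <= beta - eps ->
     z 0%nat = z0 ->
     (forall k, z (S k) = vadd (vscale (1 - w) (z k)) (vscale w (xt k))) ->
     (forall k, hypA A jac F rho beta (z k) (xt k) (e k) (Gam k)) ->
     exists L : R,
       (forall k, Rbar_le (Jfun A F (z (S k))) (Jfun A F (z k))) /\
       Rbar_cv (fun k => Jfun A F (z k)) L /\
       (forall xh, accum_pt z xh ->
          clarke_critical A jac F xh /\ Jfun A F xh = Fin L) /\
       (forall U1 U2 : vec N -> Prop,
          closed_vset U1 -> closed_vset U2 -> (forall x, ~ (U1 x /\ U2 x)) ->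
          (forall x, (in_dom F x /\ clarke_critical A jac F x /\ Jfun A F x = Fin L)
                     <-> (U1 x \/ U2 x)) ->
          ((forall xh, accum_pt z xh -> U1 xh) /\ dist_to_0 z U1) \/
          ((forall xh, accum_pt z xh -> U2 xh) /\ dist_to_0 z U2))).
Proof.
split=> [rho beta z xt e Gam _ _|]; first exact: Jlin_sufficient_decrease.
move=> z0 d C Amax infF rho beta eps w z xt e Gam z0_dom sublevel [infF_le _] [Amax_ge _]
  _ _ taylor _ beta_pos [eps_pos _] w01 step_d w_small z_init z_next hypA_k.
have [Jz0 J_z0] : exists Jz0, Jfun A F z0 = Fin Jz0.
  by case: (in_dom_fin z0_dom) => f0 F_z0; rewrite /Jfun F_z0; eexists.
have {}step_d := step_d _ J_z0.
rewrite J_z0 in sublevel taylor; rewrite -z_init in J_z0.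
eexists; exact: (iterates_converge HFconv HFlsc HA infF_le Amax_ge sublevel taylor beta_pos
  eps_pos w01 step_d w_small J_z0 z_next hypA_k).
Qed.
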